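(* Suppose $A$ and $B$ are compact subsets of $\mathbb{R}$ and there exist $a_1, a_2 \in A$ and $b_1, b_2 \in B$ with $a_1 \leq b_1 \leq a_2 \leq b_2$. Then $A$ and $B$ are interleaved. Moreover, if $$\min\{ b_1 - a_1,\ a_2 - b_1,\ b_2 - a_2\} \geq 2\epsilon$$ for some $\epsilon > 0$, then $A$ and $B$ are $\epsilon$-strongly interleaved.
   Context: For a compact set $C \subset \mathbb{R}$, a gap of $C$ is a maximal connected component of $\mathbb{R} \setminus C$ (including the two unbounded components). Two compact sets $C_1, C_2 \subset \mathbb{R}$ are interleaved if neither set is contained in a gap of the other. The Hausdorff distance between compact sets is $d_{\mathrm{H}}(X,Y) = \max\{\sup_{x\in X} d(x,Y), \sup_{y \in Y} d(y,X)\}$. For $\epsilon > 0$, compact sets $A, B$ are $\epsilon$-strongly interleaved if $A'$ and $B'$ are interleaved whenever $A', B'$ are compact subsets of $\mathbb{R}$ with $d_{\mathrm{H}}(A,A') \le \epsilon$ and $d_{\mathrm{H}}(B,B') \le \epsilon$. *)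

From HB Require Import structures.
From mathcomp Require Import all_boot all_order all_algebra.
From mathcomp Require Import all_classical all_reals all_analysis.
Set Implicit Arguments. Unset Strict Implicit. Unset Printing Implicit Defensive.
Import Order.TTheory GRing.Theory Num.Theory numFieldNormedType.Exports.
Local Open Scope classical_set_scope.
Local Open Scope ring_scope.

Section Defs.
Variable R : realType.

Definition gap (C G : set R) : Prop :=
  exists x, (~` C) x /\ G = connected_component (~` C) x.

Definition in_gap_of (X C : set R) : Prop :=
  exists G, gap C G /\ X `<=` G.

Definition interleaved (C1 C2 : set R) : Prop :=
  ~ in_gap_of C1 C2 /\ ~ in_gap_of C2 C1.

(* d(x, Y) = inf_{y in Y} |x - y|, in the extended reals (+oo if Y empty) *)
Definition dist_set (x : R) (Y : set R) : \bar R :=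
  ereal_inf [set (`|x - y|)%:E | y in Y].

Definition hausdorff_dist (X Y : set R) : \bar R :=
  maxe (ereal_sup [set dist_set x Y | x in X])
       (ereal_sup [set dist_set y X | y in Y]).

Definition strongly_interleaved (eps : R) (A B : set R) : Prop :=
  forall A' B' : set R, compact A' -> compact B' ->
    (hausdorff_dist A A' <= eps%:E)%E -> (hausdorff_dist B B' <= eps%:E)%E ->
    interleaved A' B'.
End Defs.

From HB Require Import structures.
From mathcomp Require Import all_boot all_order all_algebra.
From mathcomp Require Import all_classical all_reals all_analysis.
From mathcomp Require Import lra.
Import Order.TTheory GRing.Theory Num.Theory numFieldNormedType.Exports.
Local Open Scope classical_set_scope.
Local Open Scope ring_scope.

(* Gaps are intervals avoiding the set, so a gap of B containing a1 <= a2
   would contain b1 in between, and a gap of A containing b1 <= b2 would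
   contain a2.  Every point of A (resp. B) has a point of A' (resp. B') within
   eps, the distance to a compact set being attained; moving each of the four
   points by at most eps keeps them alternating when consecutive ones are
   2 eps apart, so A' and B' are interleaved as well. *)

Section Interleaving.
Set Implicit Arguments.
Unset Strict Implicit.
Variable R : realType.

Lemma gap_itv (C G : set R) (x y z : R) :
  gap C G -> G x -> G y -> x <= z <= y -> ~ C z.
Proof.
move=> [c [_ ->]] Gx Gy xzy.
have /connected_intervalP itv := @component_connected _ (~` C) c.
exact: connected_component_sub (itv x y Gx Gy z xzy).
Qed.

Lemma alternating_interleaved (A B : set R) (a1 a2 b1 b2 : R) :
  A a1 -> A a2 -> B b1 -> B b2 ->
  a1 <= b1 -> b1 <= a2 -> a2 <= b2 -> interleaved A B.
Proof.
move=> Aa1 Aa2 Bb1 Bb2 ab1 ba2 ab2.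
split=> -[G [gapG sub]].
- by apply: (gap_itv gapG (sub _ Aa1) (sub _ Aa2) _ Bb1); rewrite ab1.
- by apply: (gap_itv gapG (sub _ Bb1) (sub _ Bb2) _ Aa2); rewrite ba2.
Qed.

Lemma compact_dist_set_le (Y : set R) (x e : R) :
  compact Y -> (dist_set x Y <= e%:E)%E -> exists2 y, Y y & `|x - y| <= e.
Proof.
move=> cY dxY.
have /ereal_inf_lt[_ [y Yy _] _] : (dist_set x Y < (e + 1)%:E)%E.
  by apply: le_lt_trans dxY _; rewrite lte_fin ltrDl.
have dist_cont : {within Y, continuous (fun t : R => `|x - t|)}.
  apply: continuous_subspaceT => t.
  by apply: cvg_norm; apply: cvgB; [exact: cvg_cst | exact: cvg_id].
have [c /set_mem Yc minc] := compact_EVT_min (ex_intro _ y Yy) cY dist_cont.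
exists c => //; rewrite -lee_fin; apply: le_trans dxY.
apply: le_ereal_inf_tmp => _ [t Yt <-]; rewrite lee_fin.
by apply: minc; rewrite inE.
Qed.

Lemma hausdorff_dist_le_near (X Y : set R) (e x : R) :
  compact Y -> (hausdorff_dist X Y <= e%:E)%E -> X x ->
  exists2 y, Y y & `|x - y| <= e.
Proof.
move=> cY; rewrite /hausdorff_dist ge_max => /andP[dXY _] Xx.
apply: compact_dist_set_le => //; apply: le_trans dXY.
by apply: ereal_sup_ubound; exists x.
Qed.

End Interleaving.

Theorem lemma2p3 (R : realType) (A B : set R) (a1 a2 b1 b2 : R) :
  compact A -> compact B ->
  A a1 -> A a2 -> B b1 -> B b2 ->
  a1 <= b1 -> b1 <= a2 -> a2 <= b2 ->
  interleaved A B /\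
  (forall eps : R, 0 < eps ->
     Num.min (b1 - a1) (Num.min (a2 - b1) (b2 - a2)) >= eps *+ 2 ->
     strongly_interleaved eps A B).
Proof.
move=> _ _ Aa1 Aa2 Bb1 Bb2 ab1 ba2 ab2.
split; first exact: alternating_interleaved Aa1 Aa2 Bb1 Bb2 ab1 ba2 ab2.
move=> eps _; rewrite !le_min mulr2n => /and3P[gap1 gap2 gap3].
move=> A' B' cA' cB' dAA' dBB'.
have [a1' A'a1' /ler_normlP[+ _]] := hausdorff_dist_le_near cA' dAA' Aa1.
have [a2' A'a2' /ler_normlP[+ +]] := hausdorff_dist_le_near cA' dAA' Aa2.
have [b1' B'b1' /ler_normlP[+ +]] := hausdorff_dist_le_near cB' dBB' Bb1.
have [b2' B'b2' /ler_normlP[_ +]] := hausdorff_dist_le_near cB' dBB' Bb2.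
move=> *; apply: (alternating_interleaved A'a1' A'a2' B'b1' B'b2'); lra.
Qed.
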